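(* Let $\mathbf c=(c_0,\dots,c_m)$ and $\mathbf d=(d_0,\dots,d_n)$ be degree sequences, and let $A=\Delta(\mathbf c)$, $B=\Delta(\mathbf d)$. Then \[\pi(\mathbf c)\cdot\pi(\mathbf d)=\sum_{\sigma\in\mathrm{Sh}(A,B)}\pi\big(\Sigma(\sigma,c_0+d_0)\big).\] More generally, for degree sequences $\mathbf d^1,\dots,\mathbf d^r$ with $\mathbf d^i=(d^i_0,\dots)$ and $A_i=\Delta(\mathbf d^i)$, \[\prod_{i=1}^r\pi(\mathbf d^i)=\sum_{\sigma\in\mathrm{Sh}(A_1,\dots,A_r)}\pi\big(\Sigma(\sigma,d^1_0+\cdots+d^r_0)\big).\]
   Context: A diagram is a finitely supported function $\mathbb Z_{\ge0}\times\mathbb Z\to\mathbb Q$, $(i,j)\mapsto\beta_{i,j}$. The (tensor) product of diagrams is $(\beta\cdot\beta')_{i,j}=\sum_{i_1+i_2=i,\ j_1+j_2=j}\beta_{i_1,j_1}\beta'_{i_2,j_2}$. A degree sequence is $\mathbf d=(d_0,\dots,d_c)\in\mathbb Z^{c+1}$ with $d_0<\cdots<d_c$. The pure diagram $\pi(\mathbf d)$ has entries $\pi(\mathbf d)_{i,j}=\prod_{k\ne i}\frac1{|d_i-d_k|}$ if $0\le i\le c$ and $j=d_i$, and $0$ otherwise. The first difference is $\Delta(\mathbf d)=(d_1-d_0,d_2-d_1,\dots,d_c-d_{c-1})$. For a sequence $s=(s_1,\dots,s_p)$ and an integer $e$, $\Sigma(s,e)=(e,e+s_1,e+s_1+s_2,\dots,e+s_1+\cdots+s_p)$.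 For finite sequences $A_1,\dots,A_r$, $\mathrm{Sh}(A_1,\dots,A_r)$ is the set of shuffles: sequences obtained by interleaving the entries of $A_1,\dots,A_r$ so that the relative order of the entries of each $A_i$ is preserved (shuffles are distinguished by which positions are occupied by entries of which $A_i$, so they are counted with multiplicity even if entries coincide). *)

From mathcomp Require Import all_boot all_order all_algebra.
Set Implicit Arguments. Unset Strict Implicit. Unset Printing Implicit Defensive.
Import Order.TTheory GRing.Theory Num.Theory.
Local Open Scope ring_scope.

(* A diagram (finitely supported function Z_{>=0} x Z -> Q) is represented as a
   formal finite sum of weighted points ((i,j), w); its value at (i,j) is the
   sum of the weights sitting at (i,j). *)
Definition diagram := seq ((nat * int) * rat).

Definition dval (D : diagram) (i : nat) (j : int) : rat :=
  \sum_(e <- D | e.1 == (i, j)) e.2.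

Definition diag_eq (D E : diagram) : Prop :=
  forall (i : nat) (j : int), dval D i j = dval E i j.

Definition dsum (Ds : seq diagram) : diagram := flatten Ds.

Definition dmul (D E : diagram) : diagram :=
  [seq ((x.1.1 + y.1.1, x.1.2 + y.1.2)%R, x.2 * y.2) | x <- D, y <- E].

Definition dunit : diagram := [:: ((0%N, 0%:Z), 1)].

Definition dprod (Ds : seq diagram) : diagram := foldr dmul dunit Ds.

Definition degree_seq (d : seq int) : bool := (0 < size d)%N && sorted <%R d.

Definition pure (d : seq int) : diagram :=
  [seq ((i, d`_i),
        \prod_(k < size d | k != i :> nat) `|((d`_i - d`_k)%:~R : rat)|^-1)
  | i <- iota 0 (size d)].

Definition Delta (d : seq int) : seq int :=
  pairmap (fun a b => b - a) (head 0 d) (behead d).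

Fixpoint Sigma (s : seq int) (e : int) : seq int :=
  match s with
  | [::] => [:: e]
  | x :: s' => e :: Sigma s' (e + x)
  end.

(* Shuffles: a shuffle of A_0,...,A_{r-1} is determined by a word w over
   {0,...,r-1} in which letter i occurs size A_i times (w records which
   sequence occupies each position); the shuffle is then filled in order. *)
Fixpoint fill_word (w : seq nat) (As : seq (seq int)) : seq int :=
  match w with
  | [::] => [::]
  | i :: w' =>
      head 0 (nth [::] As i)
        :: fill_word w' (set_nth [::] As i (behead (nth [::] As i)))
  end.

Definition label_words (As : seq (seq int)) : seq (seq nat) :=
  permutations (flatten [seq nseq (size (nth [::] As i)) i | i <- iota 0 (size As)]).

(* Sh(A_1,...,A_r), as a list with multiplicity (one entry per label word). *)
Definition shuffles (As : seq (seq int)) : seq (seq int) :=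
  [seq fill_word w As | w <- label_words As].

From mathcomp Require Import all_boot all_order all_algebra zify ring.
Import Order.TTheory GRing.Theory Num.Theory.
Local Open Scope ring_scope.
Set Implicit Arguments. Unset Strict Implicit. Unset Printing Implicit Defensive.

(* A shuffle of Delta(d^1), ..., Delta(d^r) is a monotone lattice path from 0 to
   n = (n_1, ..., n_r), where n_k + 1 is the length of d^k, and Sigma of the shuffle
   lists the values V(t) = sum_k d^k_(t_k) at the vertices t of the path.  So the
   right-hand side puts on a vertex a the sum, over the paths through a, of
   prod_(t <> a on the path) 1 / |V(a) - V(t)|, while the product of the pure
   diagrams puts prod_k prod_(l <> a_k) 1 / |d^k_(a_k) - d^k_l| on it.
   By induction on s, the paths from s that pass through a weigh
   prod_k prod_(s_k <= l < a_k) 1 / (d^k_(a_k) - d^k_l) times the total weight of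
   their parts after a: a first step in direction k multiplies the k-th factor by
   d^k_(a_k) - d^k_(s_k), and these increments add up to V(a) - V(s), which cancels
   the factor 1 / |V(a) - V(s)| of the vertex s.  The parts after a are the same
   problem read backwards with reflected coordinates, and yield the factors with
   l > a_k. *)

Section Walks.

Variable r : nat.

Definition walk (s u : seq nat) : seq nat :=
  [seq (nth 0%N s k + count_mem k u)%N | k <- iota 0 r].

Definition steps_left (n : nat -> nat) (s : seq nat) : seq nat :=
  flatten [seq nseq (n k - nth 0%N s k) k | k <- iota 0 r].

Definition valid_steps (u : seq nat) : bool := all (fun x => x < r)%N u.

Lemma size_walk s u : size (walk s u) = r.
Proof. by rewrite size_map size_iota. Qed.

Lemma nth_walk s u k : (k < r)%N ->
  nth 0%N (walk s u) k = (nth 0%N s k + count_mem k u)%N.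
Proof. by move=> kr; rewrite (nth_map 0%N) ?size_iota // nth_iota. Qed.

Lemma walk_nil s : size s = r -> walk s [::] = s.
Proof.
move=> sz; apply: (@eq_from_nth _ 0%N) => [|k]; rewrite size_walk // => kr.
by rewrite nth_walk // addn0.
Qed.

Lemma walk_cons s x u : walk s (x :: u) = walk (walk s [:: x]) u.
Proof.
by apply/eq_in_map => k; rewrite mem_iota add0n => kr; rewrite nth_walk //=; lia.
Qed.

Lemma nth_walk1_neq s x k : (k < r)%N -> x != k ->
  nth 0%N (walk s [:: x]) k = nth 0%N s k.
Proof. by move=> kr xk; rewrite nth_walk //= (negbTE xk) /= !addn0. Qed.

Lemma walk_eq_self s u : size s = r -> valid_steps u -> (walk s u == s) = (u == [::]).
Proof.
move=> sz; case: u => [|x u]; first by rewrite walk_nil // !eqxx.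
case/andP => xr _; rewrite -[RHS]/false.
apply/negbTE/eqP => /(congr1 (fun t => nth 0%N t x)).
by rewrite nth_walk //= eqxx; lia.
Qed.

Lemma sum_count_mem u : valid_steps u -> (\sum_(k < r) count_mem (k : nat) u)%N = size u.
Proof.
elim: u => [|x u IH] /=; first by rewrite big1.
case/andP => xr ur; rewrite big_split /= IH // (bigD1 (Ordinal xr)) //= eqxx big1 //.
by move=> k kx; case: eqP => // xk; move: kx; rewrite -val_eqE /= -xk eqxx.
Qed.

Lemma size_walk_nseq0 u : valid_steps u -> sumn (walk (nseq r 0%N) u) = size u.
Proof.
move=> ur; rewrite -(sum_count_mem ur) sumnE big_map.
rewrite [iota _ _](_ : _ = index_iota 0 r) ?big_mkord; last by rewrite /index_iota subn0.
by apply: eq_bigr => k _; rewrite nth_nseq if_same.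
Qed.

Lemma valid_steps_take p u : valid_steps u -> valid_steps (take p u).
Proof. by move=> /allP ur; apply/allP => x /mem_take /ur. Qed.

Section StepsLeft.

Variable n : nat -> nat.

Lemma count_steps_left s x :
  count_mem x (steps_left n s) = if (x < r)%N then (n x - nth 0%N s x)%N else 0%N.
Proof.
rewrite /steps_left count_flatten sumnE -map_comp big_map.
under eq_bigr do rewrite /= count_nseq /= eq_sym.
case: ifP => xr; last first.
  rewrite big1_seq // => k /andP[_]; rewrite mem_iota add0n.
  by case: eqP => [<-|_ _]; rewrite ?xr ?andbF ?mul0n.
rewrite (bigD1_seq x) ?mem_iota ?iota_uniq //= eqxx mul1n big1 ?addn0 //.
by move=> k; rewrite eq_sym => /negbTE ->.
Qed.

Lemma mem_steps_left s x : (x \in steps_left n s) = (x < r)%N && (nth 0%N s x < n x)%N.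
Proof. by rewrite -has_pred1 has_count count_steps_left; case: ifP; rewrite ?subn_gt0. Qed.

Lemma steps_left_rem s x : (x < r)%N -> (nth 0%N s x < n x)%N ->
  perm_eq (rem x (steps_left n s)) (steps_left n (walk s [:: x])).
Proof.
move=> xr xn; apply/allP => y _ /=; apply/eqP.
rewrite count_rem mem_steps_left xr xn /= !count_steps_left.
case: ifP => // yr; rewrite nth_walk //=.
by case: eqP => [<-|]; lia.
Qed.

Lemma big_undup_steps_left (R : Type) (idx : R) (op : Monoid.com_law idx) s (G : nat -> R) :
  \big[op/idx]_(x <- undup (steps_left n s)) G x =
  \big[op/idx]_(k < r | (nth 0%N s k < n k)%N) G k.
Proof.
have pe : perm_eq (undup (steps_left n s)) [seq k <- iota 0 r | (nth 0%N s k < n k)%N].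
  apply: uniq_perm; rewrite ?undup_uniq ?filter_uniq ?iota_uniq // => y.
  by rewrite mem_undup mem_steps_left mem_filter mem_iota add0n andbC.
rewrite (perm_big _ pe) big_filter.
by rewrite [iota _ _](_ : _ = index_iota 0 r) ?big_mkord // /index_iota subn0.
Qed.

End StepsLeft.

Definition level (V : nmodType) (f : nat -> nat -> V) (s : seq nat) : V :=
  \sum_(k < r) f k (nth 0%N s k).

Lemma level_intr (R : pzRingType) (g : nat -> nat -> int) s :
  level (fun k l => (g k l)%:~R : R) s = (level g s)%:~R.
Proof. by rewrite /level rmorph_sum. Qed.

Lemma level_walk1 (V : zmodType) (f : nat -> nat -> V) s x : (x < r)%N ->
  level f (walk s [:: x]) = level f s + (f x (nth 0%N s x).+1 - f x (nth 0%N s x)).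
Proof.
move=> xr; rewrite /level (bigD1 (Ordinal xr)) //= [in RHS](bigD1 (Ordinal xr)) //=.
rewrite nth_walk //= eqxx addn1.
under eq_bigr => k kx.
  rewrite nth_walk1_neq //; last by rewrite eq_sym.
  over.
by rewrite [RHS]addrAC (addrC (f x (nth 0%N s x))) subrK.
Qed.

Section HitSums.

Variables (R : realFieldType) (n : nat -> nat) (f : nat -> nat -> R).

Local Notation level := (level f).

Definition gap_inv (a x : seq nat) : R := `|level a - level x|^-1.

(* The weight that the pure diagram of the lattice path from [s] with steps [w]
   puts on the vertex [a]. *)
Definition hit_weight (s w a : seq nat) : R :=
  \sum_(p < (size w).+1) ((walk s (take p w) == a)%:R *
     \prod_(q < (size w).+1 | q != p) gap_inv a (walk s (take q w))).

Definition hit_sum (s a : seq nat) : R :=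
  \sum_(w <- permutations (steps_left n s)) hit_weight s w a.

Lemma hit_weight_nil s a : size s = r -> hit_weight s [::] a = (s == a)%:R.
Proof.
move=> sz; rewrite /hit_weight big_ord1 big_pred0 ?mulr1 /= ?walk_nil //.
by move=> q; rewrite ord1.
Qed.

Lemma hit_weight_cons s x w a : size s = r -> s != a ->
  hit_weight s (x :: w) a = gap_inv a s * hit_weight (walk s [:: x]) w a.
Proof.
move=> sz sa; rewrite /hit_weight big_ord_recl /= walk_nil // (negbTE sa) mul0r add0r.
rewrite mulr_sumr; apply: eq_bigr => p _; rewrite -walk_cons mulrCA; congr (_ * _).
rewrite big_mkcond big_ord_recl /= walk_nil //; congr (_ * _).
rewrite [RHS]big_mkcond; apply: eq_bigr => q _.
by rewrite (inj_eq (@lift_inj _ ord0)) -walk_cons.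
Qed.

Lemma hit_weight_uniq s w a p0 : (p0 <= size w)%N ->
  (forall p, (p <= size w)%N -> (walk s (take p w) == a) = (p == p0)) ->
  hit_weight s w a =
    \prod_(q < (size w).+1 | q != p0 :> nat) gap_inv a (walk s (take q w)).
Proof.
move=> p0w hit; rewrite /hit_weight (bigD1 (Ordinal (p0w : (p0 < (size w).+1)%N))) //=.
rewrite hit // eqxx mul1r [X in _ + X]big1 ?addr0.
  by apply: eq_bigl => q; rewrite -(inj_eq val_inj).
move=> p; rewrite -(inj_eq val_inj) /= => /negbTE pp0.
by rewrite hit ?pp0 ?mul0r // -ltnS.
Qed.

Lemma hit_sum_cons s a : size s = r -> s != a -> steps_left n s != [::] ->
  hit_sum s a =
    gap_inv a s * \sum_(k < r | (nth 0%N s k < n k)%N) hit_sum (walk s [:: (k : nat)]) a.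
Proof.
move=> sz sa ne; rewrite /hit_sum (perm_big _ (permutationsE _)) ?lt0n ?size_eq0 //.
rewrite big_allpairs_dep /=.
rewrite -(@big_undup_steps_left n _ _ _ s (fun k => hit_sum (walk s [:: k]) a)) mulr_sumr.
apply: eq_big_seq => x; rewrite mem_undup mem_steps_left => /andP[xr xn].
rewrite mulr_sumr (perm_big _ (perm_permutations (steps_left_rem xr xn))).
by apply: eq_bigr => w _; rewrite hit_weight_cons.
Qed.

Lemma hit_sum_eq0 s a k : (k < r)%N -> (nth 0%N a k < nth 0%N s k)%N ->
  hit_sum s a = 0.
Proof.
move=> kr ask; rewrite /hit_sum big1 // => w _; rewrite /hit_weight big1 // => p _.
case: eqP => [visit|]; last by rewrite mul0r.
by move: ask; rewrite -visit nth_walk //; lia.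
Qed.

End HitSums.

Definition increasing_upto (R : numDomainType) (n : nat -> nat) (f : nat -> nat -> R) :=
  forall k l l', (k < r)%N -> (l < l')%N -> (l' <= n k)%N -> f k l < f k l'.

Definition gap_prod (R : numFieldType) (f : nat -> nat -> R) (s a : seq nat) : R :=
  \prod_(k < r) \prod_(nth 0%N s k <= l < nth 0%N a k) `|f k (nth 0%N a k) - f k l|^-1.

Definition steps_to (s a : seq nat) : nat := \sum_(k < r) (nth 0%N a k - nth 0%N s k).

Lemma steps_to_walk1 s a x : (x < r)%N -> (nth 0%N s x < nth 0%N a x)%N ->
  steps_to (walk s [:: x]) a = (steps_to s a).-1.
Proof.
move=> xr sax.
rewrite /steps_to (bigD1 (Ordinal xr)) //= [in RHS](bigD1 (Ordinal xr)) //=.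
rewrite nth_walk //= eqxx.
under eq_bigr => k kx.
  rewrite nth_walk1_neq //; last by rewrite eq_sym.
  over.
by rewrite /= addn0 -subn1; lia.
Qed.

Lemma gap_prod_walk1 (R : numFieldType) (f : nat -> nat -> R) s a x : (x < r)%N ->
  (nth 0%N s x < nth 0%N a x)%N -> f x (nth 0%N a x) != f x (nth 0%N s x) ->
  gap_prod f (walk s [:: x]) a =
    gap_prod f s a * `|f x (nth 0%N a x) - f x (nth 0%N s x)|.
Proof.
move=> xr sax fne.
rewrite /gap_prod (bigD1 (Ordinal xr)) //= [in RHS](bigD1 (Ordinal xr)) //=.
rewrite nth_walk //= eqxx addn1 [in RHS]big_ltn //.
under [X in _ * X = _]eq_bigr => k kx.
  rewrite nth_walk1_neq //; last by rewrite eq_sym.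
  over.
rewrite [RHS]mulrC !mulrA mulfV ?mul1r //.
by rewrite normr_eq0 subr_eq0.
Qed.

Section Increasing.

Variables (R : realFieldType) (n : nat -> nat) (f : nat -> nat -> R).
Hypothesis f_incr : increasing_upto n f.

Lemma increasing_upto_le k l l' : (k < r)%N -> (l <= l')%N -> (l' <= n k)%N ->
  f k l <= f k l'.
Proof.
move=> kr; rewrite leq_eqVlt => /orP[/eqP->|ll'] l'n //.
exact/ltW/f_incr.
Qed.

Variable a : seq nat.
Hypotheses (a_size : size a = r) (a_le_n : forall k, (k < r)%N -> (nth 0%N a k <= n k)%N).

Definition below_a (s : seq nat) : Prop :=
  size s = r /\ forall k, (k < r)%N -> (nth 0%N s k <= nth 0%N a k)%N.

Lemma below_a_walk1 s x : below_a s -> (x < r)%N -> (nth 0%N s x < nth 0%N a x)%N ->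
  below_a (walk s [:: x]).
Proof.
move=> [sz sa] xr sax; split=> [|k kr]; first exact: size_walk.
by rewrite nth_walk //=; have := sa k kr; case: eqP => [<-|]; lia.
Qed.

Lemma below_a_eq s : below_a s -> steps_to s a = 0%N -> s = a.
Proof.
move=> [sz sa] /eqP; rewrite sum_nat_eq0 => /forallP d0.
apply: (@eq_from_nth _ 0%N) => [|k]; rewrite ?sz ?a_size // => kr.
by have := sa k kr; have /eqP := d0 (Ordinal kr); rewrite /=; lia.
Qed.

Lemma hit_sum_step (C : R) s : below_a s -> s != a ->
  (forall k, (k < r)%N -> (nth 0%N s k < nth 0%N a k)%N ->
     hit_sum n f (walk s [:: k]) a = gap_prod f (walk s [:: k]) a * C) ->
  hit_sum n f s a = gap_prod f s a * C.
Proof.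
move=> [sz sa] neq IH.
pose d (k : 'I_r) := f k (nth 0%N a k) - f k (nth 0%N s k).
have [k0 sak0] : exists k0 : 'I_r, (nth 0%N s k0 < nth 0%N a k0)%N.
  apply/existsP; apply: contraNT neq; rewrite negb_exists => /forallP sa_eq.
  apply/eqP/(@eq_from_nth _ 0%N) => [|k]; rewrite ?sz ?a_size // => kr.
  by have := sa k kr; have := sa_eq (Ordinal kr); rewrite /=; lia.
have d_ge0 (k : 'I_r) : 0 <= d k.
  by rewrite subr_ge0 increasing_upto_le ?sa ?a_le_n.
have d_gt0 (k : 'I_r) : (nth 0%N s k < nth 0%N a k)%N -> 0 < d k.
  by move=> sak; rewrite subr_gt0 f_incr ?a_le_n.
have d_eq0 (k : 'I_r) : ~~ (nth 0%N s k < nth 0%N a k)%N -> d k = 0.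
  move=> nsak; rewrite /d (_ : nth 0%N s k = nth 0%N a k) ?subrr //.
  by have := sa k (ltn_ord k); lia.
rewrite hit_sum_cons //; last first.
  have : (k0 : nat) \in steps_left n s.
    by rewrite mem_steps_left ltn_ord /=; have := a_le_n (ltn_ord k0); lia.
  by case: (steps_left n s).
have -> : \sum_(k < r | (nth 0%N s k < n k)%N) hit_sum n f (walk s [:: (k : nat)]) a =
          \sum_(k < r) gap_prod f s a * C * d k.
  rewrite [RHS](bigID (fun k : 'I_r => (nth 0%N s k < n k)%N)) /=.
  rewrite [X in _ = _ + X]big1 ?addr0; last first.
    by move=> k skn; rewrite d_eq0 ?mulr0 //; have := a_le_n (ltn_ord k); lia.
  apply: eq_bigr => k _; have [sak|] := boolP (nth 0%N s k < nth 0%N a k)%N; last first.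
    move=> nsak; rewrite d_eq0 // mulr0 (@hit_sum_eq0 _ _ _ _ _ k) // nth_walk //= eqxx.
    by move: nsak; rewrite -leqNgt; lia.
  rewrite IH // gap_prod_walk1 //; last by rewrite -subr_eq0 (gt_eqF (d_gt0 _ sak)).
  by rewrite (ger0_norm (d_ge0 k)) mulrAC.
have d_sum : 0 < \sum_(k < r) d k.
  by rewrite (bigD1 k0) //= ltr_pwDl ?d_gt0 ?sumr_ge0.
rewrite -mulr_sumr /gap_inv /level -sumrB gtr0_norm //.
by rewrite mulrC mulfK ?gt_eqF.
Qed.

Lemma hit_sum_below s : below_a s -> hit_sum n f s a = gap_prod f s a * hit_sum n f a a.
Proof.
move: {2}(steps_to s a) (erefl (steps_to s a)) => m; elim: m s => [|m IH] s dsa sa.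
  by rewrite (below_a_eq sa dsa) /gap_prod big1 ?mul1r // => k _; rewrite big_geq.
apply: hit_sum_step => [//||k kr sak].
  by apply: contra_eqN dsa => /eqP->; rewrite /steps_to big1 // => k; rewrite subnn.
apply: IH; first by rewrite steps_to_walk1 // dsa.
exact: below_a_walk1.
Qed.

End Increasing.

Section Duality.

Variables (R : realFieldType) (n : nat -> nat) (f : nat -> nat -> R) (a : seq nat).
Hypotheses (a_size : size a = r) (a_le_n : forall k, (k < r)%N -> (nth 0%N a k <= n k)%N).

Local Notation origin := (nseq r 0%N).

(* Reading a path from [a] to [n] backwards, with every coordinate reflected, gives a
   path from the origin to [dual_point] for the reflected values [dual_val]. *)
Definition dual_len (k : nat) : nat := (n k - nth 0%N a k)%N.
Definition dual_val (k l : nat) : R := - f k (n k - l)%N.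
Definition dual_point : seq nat := [seq dual_len k | k <- iota 0 r].

Lemma nth_dual_point k : (k < r)%N -> nth 0%N dual_point k = dual_len k.
Proof. by move=> kr; rewrite (nth_map 0%N) ?size_iota // nth_iota. Qed.

Lemma increasing_upto_dual : increasing_upto n f -> increasing_upto dual_len dual_val.
Proof.
move=> f_incr k l l' kr ll' l'n; rewrite ltrN2; apply: f_incr => //.
  by rewrite /dual_len in l'n; lia.
exact: leq_subr.
Qed.

Lemma steps_left_dual : steps_left n a = steps_left dual_len origin.
Proof.
by rewrite /steps_left; congr flatten; apply: eq_map => k; rewrite nth_nseq if_same subn0.
Qed.

Lemma hit_sum_dual_point : hit_sum dual_len dual_val dual_point dual_point = 1.
Proof.
rewrite /hit_sum; have -> : steps_left dual_len dual_point = [::].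
  rewrite /steps_left (_ : [seq _ | k <- _] = [seq [::] | k <- iota 0 r]).
    by elim: (iota 0 r).
  by apply/eq_in_map => k; rewrite mem_iota add0n => kr; rewrite nth_dual_point // subnn.
by rewrite /= big_seq1 hit_weight_nil ?eqxx // size_map size_iota.
Qed.

Section DualWord.

Variable w : seq nat.
Hypothesis w_perm : perm_eq w (steps_left n a).

Lemma count_mem_word k : (k < r)%N -> count_mem k w = dual_len k.
Proof. by move=> kr; rewrite (permP w_perm) count_steps_left kr. Qed.

Lemma word_valid_steps : valid_steps w.
Proof.
by apply/allP => x; rewrite (perm_mem w_perm) mem_steps_left => /andP[].
Qed.

Lemma dual_point_walk : dual_point = walk origin (rev w).
Proof.
apply: (@eq_from_nth _ 0%N) => [|k]; rewrite ?size_walk ?size_map ?size_iota // => kr.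
by rewrite nth_dual_point // nth_walk // nth_nseq kr count_rev count_mem_word.
Qed.

Lemma level_dual_gap j :
  level dual_val dual_point - level dual_val (walk origin (rev (drop j w))) =
  - (level f a - level f (walk a (take j w))).
Proof.
rewrite /level -!sumrB -sumrN; apply: eq_bigr => k _.
rewrite nth_dual_point // !nth_walk // nth_nseq ltn_ord add0n count_rev /dual_val /dual_len.
have cnt := count_mem_word (ltn_ord k).
rewrite -(cat_take_drop j w) count_cat /dual_len in cnt.
have akn := a_le_n (ltn_ord k).
rewrite (_ : n k - (n k - nth 0%N a k) = nth 0%N a k)%N; last by lia.
rewrite (_ : n k - count_mem (k : nat) (drop j w) =
             nth 0%N a k + count_mem (k : nat) (take j w))%N; last by lia.
by rewrite opprB opprK addrC.
Qed.

Lemma hit_weight_dual :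
  hit_weight f a w a = hit_weight dual_val origin (rev w) dual_point.
Proof.
have w_r := word_valid_steps; have rw_r : valid_steps (rev w) by rewrite /valid_steps all_rev.
rewrite (@hit_weight_uniq _ _ _ _ _ 0%N) // => [|p pw]; last first.
  by rewrite walk_eq_self ?valid_steps_take // -size_eq0 size_takel.
rewrite (@hit_weight_uniq _ _ _ _ _ (size w)) ?size_rev // => [|p pw]; last first.
  rewrite dual_point_walk; apply/eqP/eqP => [/(congr1 sumn)|->]; last first.
    by rewrite take_oversize ?size_rev.
  by rewrite !size_walk_nseq0 ?valid_steps_take // size_takel ?size_rev.
rewrite big_mkcond big_ord_recl /= mul1r.
rewrite [RHS]big_mkcond big_ord_recr /= eqxx mulr1 [RHS](reindex_inj rev_ord_inj).
apply: eq_bigr => q _ /=; have qw := ltn_ord q.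
rewrite ifT; last by apply/eqP; lia.
rewrite /bump leq0n add1n take_rev (_ : size w - (size w - q.+1) = q.+1)%N; last by lia.
by rewrite /gap_inv level_dual_gap normrN.
Qed.

End DualWord.

Hypothesis f_incr : increasing_upto n f.

Lemma hit_sum_self : hit_sum n f a a =
  \prod_(k < r) \prod_((nth 0%N a k).+1 <= l < (n k).+1)
     `|f k l - f k (nth 0%N a k)|^-1.
Proof.
have -> : hit_sum n f a a = hit_sum dual_len dual_val origin dual_point.
  rewrite /hit_sum -steps_left_dual.
  rewrite [RHS](perm_big (map rev (permutations (steps_left n a)))) ?big_map.
    by apply: eq_big_seq => w; rewrite mem_permutations => /hit_weight_dual.
  apply: uniq_perm => [||w]; first exact: permutations_uniq.
    by rewrite (map_inj_uniq (inv_inj revK)) permutations_uniq.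
  rewrite -{2}(revK w) (mem_map (inv_inj revK)) !mem_permutations.
  by rewrite perm_rev.
rewrite (hit_sum_below (increasing_upto_dual f_incr)); first last.
- by split=> [|k kr]; rewrite ?size_nseq // nth_nseq if_same.
- by move=> k kr; rewrite nth_dual_point.
- by rewrite size_map size_iota.
rewrite hit_sum_dual_point mulr1 /gap_prod; apply: eq_bigr => k _.
rewrite nth_nseq if_same nth_dual_point // big_nat_rev /= add0n.
rewrite -{1}(add0n (nth 0%N a k).+1) big_addn subSS /dual_len.
apply: eq_big_nat => l /andP[_ ln]; rewrite /dual_val.
have akn := a_le_n (ltn_ord k).
rewrite (_ : n k - (n k - nth 0%N a k) = nth 0%N a k)%N; last by lia.
rewrite (_ : n k - (n k - nth 0%N a k - l.+1) = l + (nth 0%N a k).+1)%N; last by lia.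
by rewrite opprK addrC.
Qed.

Lemma hit_sum_origin : hit_sum n f origin a =
  \prod_(k < r) \prod_(l < (n k).+1 | l != nth 0%N a k :> nat)
     `|f k (nth 0%N a k) - f k l|^-1.
Proof.
rewrite (hit_sum_below f_incr) //; last first.
  by split=> [|k kr]; rewrite ?size_nseq // nth_nseq if_same.
rewrite hit_sum_self /gap_prod -big_split; apply: eq_bigr => k _ /=.
have akn := a_le_n (ltn_ord k).
rewrite nth_nseq if_same.
rewrite -(big_mkord (fun l => l != nth 0%N a k) (fun l => `|f k (nth 0%N a k) - f k l|^-1)).
rewrite [RHS]big_mkcond [RHS](@big_cat_nat _ _ _ (nth 0%N a k)) ?leqW //=; congr (_ * _).
  by apply: eq_big_nat => l /andP[_ /ltn_eqF->].
rewrite [RHS]big_ltn ?ltnS // eqxx mul1r.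
by apply: eq_big_nat => l /andP[/gtn_eqF-> _]; rewrite -normrN opprB.
Qed.

End Duality.

End Walks.

Definition deg_val (Ds : seq (seq int)) (k l : nat) : int := (nth [::] Ds k)`_l.
Definition deg_len (Ds : seq (seq int)) (k : nat) : nat := (size (nth [::] Ds k)).-1.

Fixpoint grid (Ds : seq (seq int)) : seq (seq nat) :=
  if Ds is D :: Ds' then [seq l :: a | l <- iota 0 (size D), a <- grid Ds'] else [:: [::]].

Lemma mem_grid Ds a : (a \in grid Ds) =
  (size a == size Ds) && [forall k : 'I_(size Ds), nth 0%N a k < size (nth [::] Ds k)]%N.
Proof.
elim: Ds a => [|D Ds IH] [|l a] //=.
- by rewrite mem_seq1 eqxx; apply/esym/forallP => -[].
- by apply/negbTE/allpairsP => -[[? ?] /= [_ _]].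
rewrite eqSS; apply/allpairsP/andP => [[[l' a'] /= [l'D a'G [-> ->]]]|[sz /forallP lt]].
  move: a'G; rewrite IH => /andP[sz /forallP lt]; split=> //.
  apply/forallP => k; case: k => [[|k] /= kr]; first by rewrite mem_iota in l'D.
  exact: (lt (Ordinal (kr : (k < size Ds)%N))).
exists (l, a) => /=; split=> //.
  by rewrite mem_iota add0n; exact: (lt ord0).
rewrite IH sz; apply/forallP => k; exact: (lt (lift ord0 k)).
Qed.

Lemma grid_uniq Ds : uniq (grid Ds).
Proof.
elim: Ds => [|D Ds IH] //=; apply: allpairs_uniq => //; first exact: iota_uniq.
by move=> [l a] [l' a'] _ _ /= [-> ->].
Qed.

Definition pure_weight (d : seq int) (l : nat) : rat :=
  \prod_(k < size d | k != l :> nat) `|((d`_l - d`_k)%:~R : rat)|^-1.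

Lemma dprod_pure Ds : dprod [seq pure d | d <- Ds] =
  [seq ((sumn a, level (size Ds) (deg_val Ds) a),
        \prod_(k < size Ds) pure_weight (nth [::] Ds k) (nth 0%N a k)) | a <- grid Ds].
Proof.
elim: Ds => [|D Ds IH] /=; first by rewrite /level !big_ord0.
rewrite IH /dmul /pure; elim: (iota 0 (size D)) => //= l ls IHls.
rewrite map_cat IHls -!map_comp; congr (_ ++ _); apply: eq_map => a /=.
by rewrite /level big_ord_recl [in RHS]big_ord_recl.
Qed.

Lemma dval_map (T : Type) (s : seq T) (g : T -> nat * int) (h : T -> rat) i j :
  dval [seq (g x, h x) | x <- s] i j = \sum_(x <- s | g x == (i, j)) h x.
Proof. by rewrite /dval big_map. Qed.

Lemma dval_dsum (Es : seq diagram) i j : dval (dsum Es) i j = \sum_(E <- Es) dval E i j.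
Proof. by rewrite /dval /dsum big_flatten. Qed.

Lemma dval_pure_map (m : nat) (G : nat -> int) i j :
  dval (pure [seq G q | q <- iota 0 m]) i j =
  \sum_(p < m | ((p : nat) == i) && (G p == j))
     \prod_(k < m | k != p :> nat) `|((G p - G k)%:~R : rat)|^-1.
Proof.
rewrite /pure size_map size_iota dval_map.
rewrite -(big_mkord (fun p => (p == i) && (G p == j))
   (fun p => \prod_(k < m | k != p :> nat) `|((G p - G k)%:~R : rat)|^-1)).
rewrite /index_iota subn0 big_seq_cond [RHS]big_seq_cond.
apply: eq_big => [p|p /andP[pm _]].
  case: (boolP (p \in iota 0 m)) => //= /[dup] pm; rewrite mem_iota add0n => pltm.
  by rewrite (nth_map 0%N) ?size_iota // nth_iota // xpair_eqE.
move: pm; rewrite mem_iota add0n => pm.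
by apply: eq_bigr => k _; rewrite !(nth_map 0%N) ?size_iota // !nth_iota.
Qed.

Lemma size_Delta (d : seq int) : size (Delta d) = (size d).-1.
Proof. by case: d => [|x d] //=; rewrite /Delta size_pairmap. Qed.

Lemma nth_Delta (d : seq int) m : (m.+1 < size d)%N -> (Delta d)`_m = d`_m.+1 - d`_m.
Proof. by case: d => [|x d] //= md; rewrite /Delta /= (nth_pairmap 0). Qed.

Section Shuffles.

Variable Ds : seq (seq int).

Local Notation r := (size Ds).
Local Notation origin := (nseq (size Ds) 0%N).

(* The parts of the difference sequences not yet used by a path that has reached [s]. *)
Definition tails (s : seq nat) : seq (seq int) :=
  [seq drop (nth 0%N s k) (Delta (nth [::] Ds k)) | k <- iota 0 r].

Lemma nth_tails s k : (k < r)%N ->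
  nth [::] (tails s) k = drop (nth 0%N s k) (Delta (nth [::] Ds k)).
Proof. by move=> kr; rewrite (nth_map 0%N) ?size_iota // nth_iota. Qed.

Lemma tails_walk1 s x : (x < r)%N ->
  set_nth [::] (tails s) x (behead (nth [::] (tails s) x)) = tails (walk r s [:: x]).
Proof.
move=> xr; apply: (@eq_from_nth _ [::]) => [|k].
  by rewrite size_set_nth !size_map !size_iota; apply/maxn_idPr.
rewrite size_set_nth size_map size_iota (maxn_idPr xr) => kr.
rewrite nth_set_nth /= [RHS]nth_tails // nth_walk // nth_tails //=.
case: eqP => [->|/eqP xk]; first by rewrite eqxx -drop1 drop_drop addn1.
by rewrite nth_tails // eq_sym (negbTE xk) /= !addn0.
Qed.

Lemma fill_word_Sigma w s : size s = r -> valid_steps r w ->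
  (forall k, (k < r)%N -> (nth 0%N s k + count_mem k w <= deg_len Ds k)%N) ->
  Sigma (fill_word w (tails s)) (level r (deg_val Ds) s) =
  [seq level r (deg_val Ds) (walk r s (take q w)) | q <- iota 0 (size w).+1].
Proof.
elim: w s => [|x w IH] s sz; first by rewrite /= walk_nil.
case/andP => xr w_r fits; have x_fits := fits x xr; rewrite /= eqxx /deg_len in x_fits.
rewrite [LHS]/= tails_walk1 // nth_tails // -nth0 nth_drop addn0 nth_Delta; last by lia.
rewrite -[_ + (_ - _)](level_walk1 _ _ xr) IH ?size_walk //; last first.
  by move=> k kr; have := fits k kr; rewrite nth_walk //=; lia.
rewrite (_ : iota 0 (size (x :: w)).+1 = 0%N :: iota (1 + 0) (size w).+1) //.
rewrite map_cons take0 walk_nil // iotaDl -map_comp; congr (_ :: _).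
by apply: eq_map => q /=; rewrite -walk_cons.
Qed.

Hypothesis Ds_nonempty : forall k, (k < r)%N -> (0 < size (nth [::] Ds k))%N.

Lemma dval_pure_shuffle w i j : perm_eq w (steps_left r (deg_len Ds) origin) ->
  dval (pure (Sigma (fill_word w (tails origin)) (level r (deg_val Ds) origin))) i j =
  \sum_(a <- grid Ds | (sumn a, level r (deg_val Ds) a) == (i, j))
     hit_weight r (fun k l => (deg_val Ds k l)%:~R : rat) origin w a.
Proof.
move=> w_perm.
have cnt k : (k < r)%N -> count_mem k w = deg_len Ds k.
  by move=> kr; rewrite (permP w_perm) count_steps_left kr nth_nseq if_same subn0.
have w_r : valid_steps r w.
  by apply/allP => x; rewrite (perm_mem w_perm) mem_steps_left => /andP[].
rewrite fill_word_Sigma ?size_nseq //; last by move=> k kr; rewrite nth_nseq if_same cnt.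
rewrite dval_pure_map /hit_weight (exchange_big_dep xpredT) //= big_mkcond.
apply: eq_bigr => p _; set sp := walk r origin (take p w).
have sp_grid : sp \in grid Ds.
  rewrite mem_grid size_walk eqxx; apply/forallP => k /=.
  rewrite nth_walk // nth_nseq if_same add0n.
  have c := cnt k (ltn_ord k); rewrite -(cat_take_drop p w) count_cat /deg_len in c.
  by have := Ds_nonempty (ltn_ord k); lia.
rewrite [RHS]big_mkcond (bigD1_seq sp) ?grid_uniq //= eqxx mul1r.
rewrite [X in _ + X]big1 ?addr0 => [|a /negbTE an]; last first.
  by case: ifP => // _; rewrite eq_sym an mul0r.
rewrite xpair_eqE size_walk_nseq0 ?valid_steps_take // size_takel; last by rewrite -ltnS.
by case: ifP => // _; apply: eq_bigr => q _; rewrite /gap_inv !level_intr -rmorphB.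
Qed.

End Shuffles.

Lemma tails_origin Ds : tails Ds (nseq (size Ds) 0%N) = [seq Delta d | d <- Ds].
Proof.
rewrite /tails -[in RHS](mkseq_nth [::] Ds) /mkseq -map_comp.
by apply: eq_map => k; rewrite nth_nseq if_same drop0.
Qed.

Lemma label_words_Delta Ds : label_words [seq Delta d | d <- Ds] =
  permutations (steps_left (size Ds) (deg_len Ds) (nseq (size Ds) 0%N)).
Proof.
rewrite /label_words /steps_left size_map; congr (permutations (flatten _)).
apply/eq_in_map => k; rewrite mem_iota add0n => kr.
by rewrite (nth_map [::]) // size_Delta nth_nseq if_same subn0.
Qed.

Lemma level_origin Ds :
  level (size Ds) (deg_val Ds) (nseq (size Ds) 0%N) = \sum_(d <- Ds) head 0 d.
Proof.
rewrite (big_nth [::]) big_mkord; apply: eq_bigr => k _.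
by rewrite nth_nseq if_same /deg_val nth0.
Qed.

Lemma dprod_pure_shuffles Ds : all degree_seq Ds ->
  diag_eq (dprod [seq pure d | d <- Ds])
    (dsum [seq pure (Sigma sigma (\sum_(d <- Ds) head 0 d))
          | sigma <- shuffles [seq Delta d | d <- Ds]]).
Proof.
move=> /allP Ds_deg i j; set r := size Ds.
set fQ := fun k l => (deg_val Ds k l)%:~R : rat.
have deg k : (k < r)%N -> degree_seq (nth [::] Ds k) by move=> kr; apply/Ds_deg/mem_nth.
have nonempty k : (k < r)%N -> (0 < size (nth [::] Ds k))%N.
  by move=> kr; case/andP: (deg k kr).
have incr : increasing_upto r (deg_len Ds) fQ.
  move=> k l l' kr ll' l'n; case/andP: (deg k kr) => nz sorted_k.
  rewrite ltr_int /deg_val (lt_sorted_ltn_nth 0 sorted_k) ?inE //.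
    by apply: leq_trans ll' (leq_trans l'n _); rewrite leq_pred.
  by rewrite (leq_ltn_trans l'n) // /deg_len ltn_predL.
rewrite dprod_pure dval_map dval_dsum /shuffles -map_comp big_map.
rewrite -level_origin label_words_Delta -tails_origin.
transitivity (\sum_(w <- permutations (steps_left r (deg_len Ds) (nseq r 0%N)))
   \sum_(a <- grid Ds | (sumn a, level r (deg_val Ds) a) == (i, j))
      hit_weight r fQ (nseq r 0%N) w a); last first.
  by apply: eq_big_seq => w; rewrite mem_permutations => /dval_pure_shuffle ->.
rewrite (exchange_big_dep xpredT) //= big_mkcond; apply: eq_big_seq => a.
rewrite mem_grid => /andP[/eqP a_size /forallP a_lt].
case: ifP => _; last by rewrite big_pred0.
rewrite -/(hit_sum r (deg_len Ds) fQ (nseq r 0%N) a) hit_sum_origin //; last first.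
  by move=> k kr; have := a_lt (Ordinal kr); rewrite /deg_len /=; lia.
apply: eq_bigr => k _; rewrite /deg_len prednK ?nonempty //.
by apply: eq_bigr => l _; rewrite /fQ -rmorphB.
Qed.

Lemma dmul_dunit E : dmul E dunit = E.
Proof. by rewrite /dmul; elim: E => [|[[x y] z] E IH] //=; rewrite IH !addr0 mulr1. Qed.

Theorem theorem5p2 :
  (forall c d : seq int, degree_seq c -> degree_seq d ->
     diag_eq (dmul (pure c) (pure d))
       (dsum [seq pure (Sigma sigma (head 0 c + head 0 d))
             | sigma <- shuffles [:: Delta c; Delta d]]))
  /\
  (forall Ds : seq (seq int), (0 < size Ds)%N -> all degree_seq Ds ->
     diag_eq (dprod [seq pure d | d <- Ds])
       (dsum [seq pure (Sigma sigma (\sum_(d <- Ds) head 0 d))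
             | sigma <- shuffles [seq Delta d | d <- Ds]])).
Proof.
split=> [c d c_deg d_deg|Ds _]; last exact: dprod_pure_shuffles.
have := @dprod_pure_shuffles [:: c; d]; rewrite /= c_deg d_deg dmul_dunit.
by rewrite big_cons big_seq1; apply.
Qed.
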